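(* For every $r_0\in(0,1)$ there exists $\gamma>0$ such that for all $\delta\in(0,1/10)$ and all $0<\alpha<r\le1$, and all $z$ with $$|z|\le\gamma\,\delta\, r\,\frac{\log(e/r)}{\log(e/\alpha)},$$ one has $d_{B(0,r_0)\setminus\{r\}}(0,z)\le\frac{\delta}{2\log(e/\alpha)}$.
   Context: $d_W$ denotes the hyperbolic distance in a hyperbolic domain $W$, normalized to have curvature $-1$ (on $\mathbb D$ the density is $2|dz|/(1-|z|^2)$). $B(0,r_0)$ is the open disk of radius $r_0$ centered at $0$ (if $r\ge r_0$, $B(0,r_0)\setminus\{r\}=B(0,r_0)$). *)

From Stdlib Require Import Reals.
From Coquelicot Require Import Coquelicot.
Open Scope R_scope.

Definition unit_disk (u : C) : Prop := Cmod u < 1.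

Definition open_ball0 (r0 : R) (z : C) : Prop := Cmod z < r0.

(* Hyperbolic distance on D, curvature -1 (density 2|dz|/(1-|z|^2)):
   d_D(u,v) = log((1+t)/(1-t)),  t = |(u-v)/(1 - conj(u) v)|. *)
Definition disk_dist (u v : C) : R :=
  let t := Cmod ((u - v) / (1 - Cconj u * v))%C in
  ln ((1 + t) / (1 - t)).

Definition holomorphic_on (U : C -> Prop) (f : C -> C) : Prop :=
  forall z : C, U z -> ex_derive (K := C_AbsRing) (V := C_NormedModule) f z.

Definition continuous_on_set (V : C -> Prop) (g : C -> C) : Prop :=
  forall y : C, V y -> filterlim g (within V (locally y)) (locally (g y)).

Definition covering_map_disk (W : C -> Prop) (p : C -> C) : Prop :=
  (forall u, unit_disk u -> W (p u)) /\
  (forall w, W w -> exists u, unit_disk u /\ p u = w) /\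
  (forall w, W w ->
     exists V : C -> Prop, open V /\ V w /\ (forall y, V y -> W y) /\
     exists (I : Type) (S : I -> C -> Prop),
       (forall i, open (S i)) /\
       (forall i x, S i x -> unit_disk x) /\
       (forall i j x, S i x -> S j x -> i = j) /\
       (forall x, unit_disk x -> (V (p x) <-> exists i, S i x)) /\
       (forall i, exists g : C -> C,
          continuous_on_set V g /\
          (forall y, V y -> S i (g y) /\ p (g y) = y) /\
          (forall x, S i x -> g (p x) = x))).

(* Hyperbolic distance on a hyperbolic domain W, via a holomorphic universal
   covering p : D -> W (D is simply connected, so any holomorphic covering
   from D is universal):  d_W(a,b) = inf { d_D(u,v) : p(u)=a, p(v)=b }.
   The infimum is also taken over all such coverings (they differ by
   automorphisms of D, so this does not change the value). *)
Definition hyp_dist (W : C -> Prop) (a b : C) : Rbar :=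
  Glb_Rbar (fun d => exists (p : C -> C) (u v : C),
     holomorphic_on unit_disk p /\ covering_map_disk W p /\
     unit_disk u /\ unit_disk v /\ p u = a /\ p v = b /\ d = disk_dist u v).

Definition punctured_ball (r0 r : R) (z : C) : Prop :=
  open_ball0 r0 z /\ z <> RtoC r.

(** With a = r / r0, the map u |-> exp ((u + 1) / (u - 1)) followed by the disk automorphism
    s |-> r0 (s + a) / (1 + a s) is a holomorphic universal covering of B(0, r0) \ {r}; for r >= r0
    the disk itself is covered by u |-> r0 u.  As d_W is an infimum over lifts, it suffices to
    exhibit close lifts of 0 and z.  In the left half-plane H = cayley(D), 0 lifts to
    zeta = ln a + i pi, and z lifts to zeta + eta with |eta| <= 8 (|z| / r) (1 - a^2), which is
    small compared with |Re zeta| = ln (r0 / r).  The pseudo-hyperbolic distance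
    |eta| / |conj zeta + zeta + eta| of H is then at most |eta| / ln (r0 / r), and
    (1 - a^2) (1 + 2 ln (r0 / r)) <= 4 ln (r0 / r) turns this into
      d(0, z) <= 96 |z| / (r (1 + 2 ln (r0 / r))).
    Since ln (e / r) = 1 - ln r0 + ln (r0 / r), the theorem follows with
    gamma = r0 / (192 (1 - ln r0)). *)

From Stdlib Require Import Reals Lra Lia ZArith.
From Coquelicot Require Import Coquelicot.
Open Scope R_scope.

Lemma sin_bounds_nonneg (x : R) : 0 <= x -> - x <= sin x <= x.
Proof.
  intros Hx. destruct (Req_dec x 0) as [->|Hx0]; [rewrite sin_0; lra|].
  pose proof (sin_lt_x x ltac:(lra)). pose proof (SIN_bound x).
  destruct (Rle_dec x 1); [|lra].
  pose proof PI2_1. pose proof (sin_ge_0 x Hx ltac:(lra)). lra.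
Qed.

Lemma Rabs_sin_le (x : R) : Rabs (sin x) <= Rabs x.
Proof.
  destruct (Rle_dec 0 x) as [Hx|Hx].
  - pose proof (sin_bounds_nonneg x Hx). rewrite (Rabs_pos_eq x) by lra. apply Rabs_le. lra.
  - pose proof (sin_bounds_nonneg (- x) ltac:(lra)). rewrite sin_neg in H.
    rewrite (Rabs_left x) by lra. apply Rabs_le. lra.
Qed.

Lemma Rabs_sin_sub_le_nonneg (x : R) : 0 <= x <= 1 -> Rabs (sin x - x) <= x ^ 2.
Proof.
  intros Hx. destruct (sin_bound x 0) as [Hlo Hhi]; [lra | pose proof PI2_1; lra |].
  unfold sin_approx, sin_term in Hlo, Hhi. simpl in Hlo, Hhi.
  assert (H3 : 0 <= x * (x * x) <= x * x) by (split; nra).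
  assert (H5 : x * (x * (x * (x * x))) <= x * (x * x)) by nra.
  apply Rabs_le. simpl. lra.
Qed.

Lemma Rabs_sin_sub_le (x : R) : Rabs x <= 1 -> Rabs (sin x - x) <= x ^ 2.
Proof.
  intros Hx. destruct (Rle_dec 0 x) as [Hx0|Hx0].
  - apply Rabs_sin_sub_le_nonneg. rewrite Rabs_pos_eq in Hx; lra.
  - rewrite Rabs_left in Hx by lra.
    pose proof (Rabs_sin_sub_le_nonneg (- x) ltac:(lra)) as H.
    rewrite sin_neg, <- Rabs_Ropp in H. replace (- (- sin x - - x)) with (sin x - x) in H by ring.
    replace ((- x) ^ 2) with (x ^ 2) in H by ring. exact H.
Qed.

Lemma Rabs_cos_sub1_le (x : R) : Rabs (cos x - 1) <= x ^ 2 / 2.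
Proof.
  replace x with (2 * (x / 2)) at 1 by field. rewrite cos_2a_sin.
  pose proof (Rabs_sin_le (x / 2)) as H.
  assert (sin (x / 2) ^ 2 <= (x / 2) ^ 2) by (rewrite <- (pow2_abs (sin _)), <- (pow2_abs (x / 2));
    pose proof (Rabs_pos (sin (x / 2))); nra).
  rewrite Rabs_left1; simpl in *; nra.
Qed.

Lemma exp_le_inv_one_sub (a : R) : a < 1 -> exp a <= 1 / (1 - a).
Proof.
  intros Ha. pose proof (exp_ineq1_le (- a)). pose proof (exp_pos a).
  assert (exp a * exp (- a) = 1) by (rewrite <- exp_plus, Rplus_opp_r; apply exp_0).
  apply (Rmult_le_reg_r (1 - a)); [lra|]. field_simplify; nra.
Qed.

Lemma Rabs_exp_sub1_sub_le (a : R) : Rabs a <= 1/2 -> Rabs (exp a - 1 - a) <= 2 * a ^ 2.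
Proof.
  intros Ha. apply Rabs_le_between in Ha.
  pose proof (exp_ineq1_le a). pose proof (exp_le_inv_one_sub a ltac:(lra)).
  assert (1 / (1 - a) - 1 - a <= 2 * a ^ 2) by
    (apply (Rmult_le_reg_r (1 - a)); [lra | field_simplify; [nra | lra]]).
  apply Rabs_le. nra.
Qed.

Lemma ln_le_sub1 (x : R) : 0 < x -> ln x <= x - 1.
Proof. intros Hx. pose proof (exp_ineq1_le (ln x)). rewrite exp_ln in H by exact Hx. lra. Qed.

Lemma Rabs_ln_le (x : R) : 1/2 <= x -> Rabs (ln x) <= 2 * Rabs (x - 1).
Proof.
  intros Hx. pose proof (ln_le_sub1 x ltac:(lra)) as Hup.
  pose proof (ln_le_sub1 (/ x) ltac:(apply Rinv_0_lt_compat; lra)) as Hlo.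
  rewrite ln_Rinv in Hlo by lra.
  assert (/ x - 1 <= 2 * Rabs (x - 1)).
  { replace (/ x - 1) with ((1 - x) / x) by (field; lra).
    destruct (Rle_dec 1 x).
    - pose proof (Rabs_pos (x - 1)).
      assert ((1 - x) / x <= 0)
        by (apply Rmult_le_0_r; [lra | left; apply Rinv_0_lt_compat; lra]).
      lra.
    - rewrite Rabs_left by lra. apply (Rmult_le_reg_r x); [lra |]. field_simplify; nra. }
  pose proof (Rle_abs (x - 1)). apply Rabs_le. lra.
Qed.

Lemma Rabs_atan_le (x : R) : Rabs (atan x) <= Rabs x.
Proof.
  assert (Hdecr : forall c, 0 < / (1 + c ^ 2) <= 1).
  { intros c. split; [apply Rinv_0_lt_compat; nra|].
    rewrite <- Rinv_1. apply Rinv_le_contravar; nra. }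
  destruct (Rtotal_order 0 x) as [H|[<-|H]].
  - destruct (MVT_cor2 atan (fun y => / (1 + y ^ 2)) 0 x H) as [c [Hc _]].
    { intros; apply derivable_pt_lim_atan. }
    rewrite atan_0, !Rminus_0_r in Hc. specialize (Hdecr c).
    rewrite Hc, !Rabs_pos_eq; nra.
  - rewrite atan_0. lra.
  - destruct (MVT_cor2 atan (fun y => / (1 + y ^ 2)) x 0 H) as [c [Hc _]].
    { intros; apply derivable_pt_lim_atan. }
    rewrite atan_0 in Hc. specialize (Hdecr c).
    rewrite (Rabs_left x) by lra. rewrite Rabs_left1; nra.
Qed.

Lemma ln_pseudo_dist_le (t : R) : 0 <= t <= 1/3 -> ln ((1 + t) / (1 - t)) <= 3 * t.
Proof.
  intros Ht. eapply Rle_trans; [apply ln_le_sub1, Rdiv_lt_0_compat; lra|].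
  apply (Rmult_le_reg_r (1 - t)); [lra|]. field_simplify; nra.
Qed.

Lemma ln_lt_0 (x : R) : 0 < x < 1 -> ln x < 0.
Proof. intros Hx. rewrite <- ln_1. apply ln_increasing; lra. Qed.

Lemma one_sub_sq_le (a : R) : 0 < a -> 1 - a ^ 2 <= - 2 * ln a.
Proof.
  intros Ha. pose proof (ln_le_sub1 (a ^ 2) ltac:(apply pow_lt, Ha)) as H.
  rewrite ln_pow in H by exact Ha. simpl in H. lra.
Qed.

Lemma one_sub_sq_mul_le (a : R) : 0 < a < 1 -> (1 - a ^ 2) * (1 - 2 * ln a) <= - 4 * ln a.
Proof.
  intros Ha. pose proof (one_sub_sq_le a (proj1 Ha)).
  pose proof (ln_lt_0 a Ha).
  assert (0 <= 1 - a ^ 2 <= 1) by (split; nra). nra.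
Qed.

Lemma mul_one_sub_ln_le_1 (r : R) : 0 < r -> r * (1 - ln r) <= 1.
Proof.
  intros Hr. pose proof (ln_le_sub1 (/ r) (Rinv_0_lt_compat r Hr)) as H.
  rewrite ln_Rinv in H by exact Hr.
  apply (Rmult_le_compat_l r) in H; [|lra].
  replace (r * (/ r - 1)) with (1 - r) in H by (field; lra). lra.
Qed.

Lemma ln_e_div (x : R) : 0 < x -> ln (exp 1 / x) = 1 - ln x.
Proof. intros Hx. rewrite ln_div, ln_exp by (apply exp_pos || exact Hx). reflexivity. Qed.

Lemma Rabs_Im_le_Cmod (z : C) : Rabs (snd z) <= Cmod z.
Proof. eapply Rle_trans; [apply Rmax_r | apply Rmax_Cmod]. Qed.

Lemma Cmod_le_Rabs_add (z : C) : Cmod z <= Rabs (fst z) + Rabs (snd z).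
Proof.
  pose proof (Cmod_ge_0 z). pose proof (Cmod2_alt z) as Hz.
  pose proof (Rabs_pos (fst z)). pose proof (Rabs_pos (snd z)).
  unfold Re, Im in Hz. rewrite <- (pow2_abs (fst z)), <- (pow2_abs (snd z)) in Hz. nra.
Qed.

Lemma Rabs_Re_sub_le (z w : C) : Rabs (fst z - fst w) <= Cmod (z - w).
Proof. apply (re_le_Cmod (z - w)). Qed.

Lemma Re_pos_near_1 (q : C) : Cmod (q - 1) < 1 -> 0 < fst q.
Proof.
  intros Hq. pose proof (Rabs_Re_sub_le q 1) as H. apply Rabs_le_between' in H.
  change (fst (RtoC 1)) with 1 in H. lra.
Qed.

Lemma Cmod_triangle_sub (y w : C) : Cmod w - Cmod (y - w) <= Cmod y <= Cmod w + Cmod (y - w).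
Proof.
  pose proof (Cmod_triangle y (w - y)). pose proof (Cmod_triangle w (y - w)).
  replace (y + (w - y))%C with w in H by ring. replace (w + (y - w))%C with y in H0 by ring.
  replace (w - y)%C with (- (y - w))%C in H by ring. rewrite Cmod_opp in H. lra.
Qed.

Lemma RtoC_neq_0 (x : R) : x <> 0 -> RtoC x <> 0%C.
Proof. intros Hx E. apply Hx, RtoC_inj, E. Qed.

Lemma Cmod_div_Rpos (r0 : R) (y : C) : 0 < r0 -> Cmod (y / r0) = Cmod y / r0.
Proof.
  intros Hr0. rewrite Cmod_div, Cmod_R, Rabs_pos_eq by (lra || apply RtoC_neq_0; lra).
  reflexivity.
Qed.

Lemma unit_disk_div (r0 : R) (y : C) : 0 < r0 -> Cmod y < r0 -> unit_disk (y / r0).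
Proof.
  intros Hr0 Hy. unfold unit_disk. rewrite Cmod_div_Rpos by exact Hr0.
  apply (Rmult_lt_reg_r r0); [exact Hr0|]. field_simplify; lra.
Qed.

Lemma Cminus_1_neq_0 (u : C) : u <> 1%C -> (u - 1)%C <> 0%C.
Proof. intros Hu E. apply Hu. replace u with (u - 1 + 1)%C by ring. rewrite E. ring. Qed.

Lemma Re_neg_neq_1 (z : C) : fst z < 0 -> z <> 1%C.
Proof. intros Hz ->. simpl in Hz. lra. Qed.

Lemma unit_disk_neq_1 (u : C) : unit_disk u -> u <> 1%C.
Proof. unfold unit_disk. intros Hu ->. rewrite Cmod_1 in Hu. lra. Qed.

Lemma locally_C (x : C) (P : C -> Prop) :
  locally x P <-> exists d, 0 < d /\ forall y, Cmod (y - x) < d -> P y.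
Proof.
  split.
  - intros [eps Heps]. exists eps. split; [apply cond_pos|].
    intros y Hy. apply Heps, C_NormedModule_mixin_compat1, Hy.
  - intros [d [Hd HP]]. exists (mkposreal (d / 2) ltac:(lra)). intros y [Hre Him]. apply HP.
    change (Rabs (fst y - fst x) < d / 2) in Hre. change (Rabs (snd y - snd x) < d / 2) in Him.
    eapply Rle_lt_trans; [apply Cmod_le_Rabs_add|].
    change (Rabs (fst y - fst x) + Rabs (snd y - snd x) < d). lra.
Qed.

Lemma open_C (P : C -> Prop) :
  (forall x, P x -> exists d, 0 < d /\ forall y, Cmod (y - x) < d -> P y) -> open P.
Proof. intros HP x Hx. apply locally_C, HP, Hx. Qed.

Lemma open_Cball (w : C) (rho : R) : open (fun y => Cmod (y - w) < rho).
Proof.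
  apply open_C. intros x Hx. exists (rho - Cmod (x - w)). split; [lra|].
  intros y Hy. replace (y - w)%C with ((y - x) + (x - w))%C by ring.
  pose proof (Cmod_triangle (y - x) (x - w)). lra.
Qed.

Lemma open_unit_disk : open unit_disk.
Proof.
  apply open_C. intros x Hx. exists (1 - Cmod x). unfold unit_disk in *. split; [lra|].
  intros y Hy. destruct (Cmod_triangle_sub y x). lra.
Qed.

Lemma open_punctured_ball (r0 r : R) : open (punctured_ball r0 r).
Proof.
  apply open_and.
  - apply open_C. intros x Hx. unfold open_ball0 in *. exists (r0 - Cmod x). split; [lra|].
    intros y Hy. destruct (Cmod_triangle_sub y x). lra.
  - apply open_C. intros x Hx. exists (Cmod (x - r)). split.
    + apply Cmod_gt_0. intros E. apply Hx. replace x with (x - r + r)%C by ring. rewrite E. ring.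
    + intros y Hy ->. replace (r - x)%C with (- (x - r))%C in Hy by ring.
      rewrite Cmod_opp in Hy. lra.
Qed.

Lemma continuous_Cmod (x : C) : continuous Cmod x.
Proof. apply (filterlim_norm (V := C_NormedModule)). Qed.

Lemma continuous_C_pair (f g : C -> R) (x : C) :
  continuous f x -> continuous g x -> continuous (fun y => (f y, g y) : C) x.
Proof.
  intros Hf Hg P [eps HP].
  pose proof (Hf _ (locally_ball (f x) eps)) as H1.
  pose proof (Hg _ (locally_ball (g x) eps)) as H2.
  unfold filtermap in H1, H2 |- *.
  apply (filter_imp (fun y => ball (f x) eps (f y) /\ ball (g x) eps (g y))).
  - intros y Hy. apply HP, Hy.
  - apply (filter_and _ _ H1 H2).
Qed.

Lemma continuous_Cminus (f g : C -> C) (x : C) :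
  continuous f x -> continuous g x -> continuous (fun y => f y - g y)%C x.
Proof. apply (continuous_minus (V := C_NormedModule)). Qed.

Lemma continuous_on_set_continuous (V : C -> Prop) (g : C -> C) :
  (forall y, V y -> continuous g y) -> continuous_on_set V g.
Proof.
  intros Hg y Hy P HP. apply (filter_imp _ _ (fun z Hz _ => Hz)), (Hg y Hy P HP).
Qed.

(* Coquelicot's chain rule needs the inner function to take values in
   [AbsRing_NormedModule C_AbsRing]; [holomorphic_on] uses [C_NormedModule], a different
   normed structure on C, whence [C_derivable_ex_derive]. *)
Definition C_derivable (f : C -> C) (x : C) : Prop :=
  ex_derive (K := C_AbsRing) (V := AbsRing_NormedModule C_AbsRing) f x.

Lemma is_derive_C_quadratic (f : C -> C) (x l : C) (rho K : R) :
  0 < rho -> 0 <= K ->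
  (forall y, Cmod (y - x) < rho -> Cmod (f y - f x - (y - x) * l) <= K * Cmod (y - x) ^ 2) ->
  is_derive (K := C_AbsRing) (V := AbsRing_NormedModule C_AbsRing) f x l.
Proof.
  intros Hrho HK Hf. split; [apply is_linear_scal_l|].
  intros x' Hx' eps.
  apply (is_filter_lim_locally_unique (V := AbsRing_NormedModule C_AbsRing)) in Hx'. subst x'.
  assert (Hd : 0 < Rmin rho (eps / (K + 1))) by
    (apply Rmin_pos; [lra | apply Rdiv_lt_0_compat; [apply cond_pos | lra]]).
  eapply filter_imp;
    [| apply (locally_ball_norm (V := AbsRing_NormedModule C_AbsRing) x (mkposreal _ Hd))].
  intros y Hy. change (Cmod (y - x) < Rmin rho (eps / (K + 1))) in Hy.
  change (Cmod (f y - f x - (y - x) * l) <= eps * Cmod (y - x)).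
  pose proof (Rmin_l rho (eps / (K + 1))). pose proof (Rmin_r rho (eps / (K + 1))).
  pose proof (Cmod_ge_0 (y - x)). pose proof (cond_pos eps).
  assert (K * Cmod (y - x) <= eps).
  { assert ((K + 1) * Cmod (y - x) < eps).
    { apply (Rlt_le_trans _ ((K + 1) * (eps / (K + 1)))); [apply Rmult_lt_compat_l; lra|].
      right. field. lra. }
    nra. }
  eapply Rle_trans; [apply Hf; lra | nra].
Qed.

Lemma C_derivable_ex_derive (f : C -> C) (x : C) :
  C_derivable f x -> ex_derive (K := C_AbsRing) (V := C_NormedModule) f x.
Proof.
  intros [l [_ Hl]]. exists l. split; [apply is_linear_scal_l|].
  intros x' Hx' eps. exact (Hl x' Hx' eps).
Qed.

Lemma C_derivable_continuous (f : C -> C) (x : C) : C_derivable f x -> continuous f x.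
Proof.
  intros Hf P HP. apply C_derivable_ex_derive, ex_derive_continuous in Hf.
  destruct (Hf P HP) as [eps Heps]. apply locally_C. exists eps. split; [apply cond_pos|].
  intros y Hy. apply Heps. exact Hy.
Qed.

Lemma C_derivable_id (x : C) : C_derivable (fun y => y) x.
Proof. apply ex_derive_id. Qed.

Lemma C_derivable_const (c x : C) : C_derivable (fun _ => c) x.
Proof. apply ex_derive_const. Qed.

Lemma C_derivable_plus (f g : C -> C) (x : C) :
  C_derivable f x -> C_derivable g x -> C_derivable (fun y => f y + g y)%C x.
Proof. exact (ex_derive_plus (V := AbsRing_NormedModule C_AbsRing) f g x). Qed.

Lemma C_derivable_minus (f g : C -> C) (x : C) :
  C_derivable f x -> C_derivable g x -> C_derivable (fun y => f y - g y)%C x.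
Proof. exact (ex_derive_minus (V := AbsRing_NormedModule C_AbsRing) f g x). Qed.

Lemma C_derivable_mult (f g : C -> C) (x : C) :
  C_derivable f x -> C_derivable g x -> C_derivable (fun y => f y * g y)%C x.
Proof.
  intros [df Hf] [dg Hg]. eexists. apply (is_derive_mult f g x df dg Hf Hg), Cmult_comm.
Qed.

Lemma C_derivable_comp (f g : C -> C) (x : C) :
  C_derivable f (g x) -> C_derivable g x -> C_derivable (fun y => f (g y)) x.
Proof. exact (ex_derive_comp (V := AbsRing_NormedModule C_AbsRing) f g x). Qed.

Lemma C_derivable_inv (x : C) : x <> 0%C -> C_derivable Cinv x.
Proof.
  intros Hx. apply Cmod_gt_0 in Hx as Hm. exists (- / (x * x))%C.
  apply (is_derive_C_quadratic _ x _ (Cmod x / 2) (2 / Cmod x ^ 3)); [lra | |].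
  { apply Rdiv_le_0_compat; [lra | apply pow_lt, Hm]. }
  intros y Hy. destruct (Cmod_triangle_sub y x) as [Hyx _].
  assert (Hy0 : y <> 0%C) by (apply Cmod_gt_0; lra).
  replace (/ y - / x - (y - x) * - / (x * x))%C with ((y - x) * (y - x) / (x * x * y))%C
    by (field; split; assumption).
  rewrite Cmod_div, !Cmod_mult by (repeat apply Cmult_neq_0; assumption).
  assert (Hinv : / (Cmod x * Cmod x * Cmod y) <= 2 / Cmod x ^ 3).
  { replace (2 / Cmod x ^ 3) with (/ (Cmod x ^ 3 / 2)) by (field; lra).
    apply Rinv_le_contravar; [apply Rdiv_lt_0_compat; [apply pow_lt|]|]; simpl; nra. }
  pose proof (Cmod_ge_0 (y - x)). unfold Rdiv. simpl in *. nra.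
Qed.

Lemma C_derivable_div (f g : C -> C) (x : C) :
  C_derivable f x -> C_derivable g x -> g x <> 0%C -> C_derivable (fun y => f y / g y)%C x.
Proof.
  intros Hf Hg Hgx. apply (C_derivable_mult f (fun y => / g y)%C x Hf).
  apply (C_derivable_comp Cinv g x (C_derivable_inv _ Hgx) Hg).
Qed.

(** * The complex exponential and logarithm *)

Definition Cexp (z : C) : C := (exp (fst z) * cos (snd z), exp (fst z) * sin (snd z)).

Lemma Cexp_add (z w : C) : Cexp (z + w) = (Cexp z * Cexp w)%C.
Proof.
  destruct z as [a b], w as [c d]. unfold Cexp, Cmult; simpl.
  rewrite exp_plus, cos_plus, sin_plus. f_equal; ring.
Qed.

Lemma Cmod_Cexp (z : C) : Cmod (Cexp z) = exp (fst z).
Proof.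
  unfold Cmod, Cexp; simpl.
  replace (_ * (_ * 1) + _ * (_ * 1)) with (exp (fst z) ^ 2)
    by (pose proof (sin2_cos2 (snd z)); unfold Rsqr in *; simpl; nra).
  apply sqrt_pow2. pose proof (exp_pos (fst z)); lra.
Qed.

Lemma Cexp_re_neg (z : C) : Cmod (Cexp z) < 1 -> fst z < 0.
Proof. rewrite Cmod_Cexp, <- exp_0. apply exp_lt_inv. Qed.

Lemma Cexp_sub1_sub_le (h : C) : Cmod h <= 1/2 -> Cmod (Cexp h - 1 - h) <= 4 * Cmod h ^ 2.
Proof.
  intros Hh. pose proof (Cmod2_alt h) as Hsq. unfold Re, Im in Hsq.
  destruct h as [a b]. simpl in Hsq.
  assert (Ha : Rabs a <= 1/2) by (eapply Rle_trans; [apply (re_le_Cmod (a, b)) | exact Hh]).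
  assert (Hb : Rabs b <= 1/2) by (eapply Rle_trans; [apply (Rabs_Im_le_Cmod (a, b)) | exact Hh]).
  pose proof (Rabs_exp_sub1_sub_le a Ha) as Hexp.
  assert (Hexp2 : exp a <= 2).
  { apply Rabs_le_between in Ha. eapply Rle_trans; [apply exp_le_inv_one_sub; lra|].
    apply (Rmult_le_reg_r (1 - a)); [lra|]. field_simplify; lra. }
  pose proof (Rabs_cos_sub1_le b) as Hcos. pose proof (Rabs_sin_sub_le b ltac:(lra)) as Hsin.
  pose proof (Rabs_sin_le b). pose proof (exp_pos a).
  pose proof (Rabs_pos (cos b - 1)). pose proof (Rabs_pos (sin b)).
  rewrite <- (pow2_abs a), <- (pow2_abs b) in *.
  assert (Hre : Rabs (exp a * cos b - 1 - a) <= 2 * (Rabs a ^ 2 + Rabs b ^ 2)).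
  { replace (exp a * cos b - 1 - a) with ((exp a - 1 - a) + exp a * (cos b - 1)) by ring.
    eapply Rle_trans; [apply Rabs_triang|]. rewrite Rabs_mult, (Rabs_pos_eq (exp a)) by lra. nra. }
  assert (Him : Rabs (exp a * sin b - b) <= 2 * (Rabs a ^ 2 + Rabs b ^ 2)).
  { replace (exp a * sin b - b) with ((exp a - 1 - a) * sin b + a * sin b + (sin b - b)) by ring.
    eapply Rle_trans; [apply Rabs_triang|].
    eapply Rle_trans; [apply Rplus_le_compat_r, Rabs_triang|].
    rewrite !Rabs_mult. pose proof (Rabs_pos a). pose proof (Rabs_pos (exp a - 1 - a)).
    assert (Rabs (exp a - 1 - a) * Rabs (sin b) <= 2 * Rabs a ^ 2 * (1/2))
      by (apply Rmult_le_compat; lra).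
    assert (Rabs a * Rabs (sin b) <= Rabs a * Rabs b) by (apply Rmult_le_compat_l; lra).
    pose proof (pow2_ge_0 (Rabs a - Rabs b)). simpl in *. nra. }
  eapply Rle_trans; [apply Cmod_le_Rabs_add|]. unfold Cexp. simpl fst; simpl snd.
  replace (exp a * cos b + - (1) + - a) with (exp a * cos b - 1 - a) by ring.
  replace (exp a * sin b + - 0 + - b) with (exp a * sin b - b) by ring.
  assert (Cmod (a, b) ^ 2 = Rabs a ^ 2 + Rabs b ^ 2) by (rewrite !pow2_abs; simpl; lra).
  lra.
Qed.

Lemma C_derivable_Cexp (x : C) : C_derivable Cexp x.
Proof.
  exists (Cexp x).
  apply (is_derive_C_quadratic Cexp x (Cexp x) (1/2) (4 * Cmod (Cexp x)));
    [lra | pose proof (Cmod_ge_0 (Cexp x)); lra |].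
  intros y Hy.
  replace (Cexp y - Cexp x - (y - x) * Cexp x)%C with (Cexp x * (Cexp (y - x) - 1 - (y - x)))%C
    by (replace (Cexp y) with (Cexp (x + (y - x))) by (f_equal; ring); rewrite Cexp_add; ring).
  rewrite Cmod_mult, (Rmult_comm 4), Rmult_assoc. apply Rmult_le_compat_l; [apply Cmod_ge_0|].
  apply Cexp_sub1_sub_le. lra.
Qed.

Lemma Cexp_ln_PI (a : R) : 0 < a -> Cexp (ln a, PI) = RtoC (- a).
Proof.
  intros Ha. unfold Cexp; simpl. rewrite exp_ln, cos_PI, sin_PI by exact Ha.
  apply injective_projections; simpl; ring.
Qed.

Definition Cexp_period (k : Z) : C := (0, 2 * IZR k * PI).

Lemma Cexp_period_1 (k : Z) : Cexp (Cexp_period k) = 1%C.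
Proof.
  assert (Hsin : sin (IZR k * PI) = 0) by (apply sin_eq_0_1; exists k; reflexivity).
  unfold Cexp, Cexp_period; simpl. rewrite exp_0, !Rmult_1_l, Rmult_assoc, cos_2a_sin, sin_2a, Hsin.
  apply injective_projections; simpl; ring.
Qed.

Lemma Cexp_periodic (z : C) (k : Z) : Cexp (z + Cexp_period k) = Cexp z.
Proof. rewrite Cexp_add, Cexp_period_1. ring. Qed.

Lemma Cexp_period_inj (m k : Z) : Cmod (Cexp_period m - Cexp_period k) < 2 -> m = k.
Proof.
  intros H. pose proof (Rabs_Im_le_Cmod (Cexp_period m - Cexp_period k)) as Him.
  replace (snd (Cexp_period m - Cexp_period k)%C) with ((IZR m - IZR k) * (2 * PI)) in Him
    by (unfold Cexp_period; simpl; ring).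
  rewrite Rabs_mult, (Rabs_pos_eq (2 * PI)) in Him by (pose proof PI_RGT_0; lra).
  assert (Hmk : Rabs (IZR (m - k)) < 1).
  { rewrite minus_IZR. pose proof PI2_1. pose proof (Rabs_pos (IZR m - IZR k)). nra. }
  rewrite <- abs_IZR in Hmk. apply lt_IZR in Hmk. lia.
Qed.

Lemma Cexp_eq_1 (z : C) : Cexp z = 1%C -> exists k : Z, z = Cexp_period k.
Proof.
  intros H. destruct z as [a b].
  assert (Ha : a = 0).
  { apply exp_inv. rewrite exp_0. change (exp (fst (a, b)) = 1).
    rewrite <- Cmod_Cexp, H. apply Cmod_1. }
  subst a. unfold Cexp in H. simpl in H. rewrite exp_0, !Rmult_1_l in H.
  injection H as Hcos _.
  pose proof (cos_2a_sin (b / 2)) as Hc. replace (2 * (b / 2)) with b in Hc by field.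
  destruct (sin_eq_0_0 (b / 2)) as [k Hk]; [nra|].
  exists k. unfold Cexp_period. f_equal. lra.
Qed.

Lemma Cexp_eq (z w : C) : Cexp z = Cexp w -> exists k : Z, z = (w + Cexp_period k)%C.
Proof.
  intros H. destruct (Cexp_eq_1 (z - w)) as [k Hk].
  - assert (Hprod : (Cexp (z - w) * Cexp w = Cexp w)%C)
      by (rewrite <- Cexp_add, <- H; f_equal; ring).
    assert (Cexp w <> 0%C) by (apply Cmod_gt_0; rewrite Cmod_Cexp; apply exp_pos).
    replace (Cexp (z - w)) with (Cexp (z - w) * Cexp w / Cexp w)%C by (field; assumption).
    rewrite Hprod. field. assumption.
  - exists k. rewrite <- Hk. ring.
Qed.

Lemma Cexp_surj (w : C) : w <> 0%C -> exists z, Cexp z = w.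
Proof.
  intros Hw. apply Cmod_gt_0 in Hw as Hm. pose proof (Cmod2_alt w) as Hsq. unfold Re, Im in Hsq.
  set (m := Cmod w) in *. destruct w as [x y]. simpl fst in Hsq; simpl snd in Hsq.
  assert (Hx : -1 <= x / m <= 1).
  { split; apply (Rmult_le_reg_r m); try assumption; field_simplify; nra. }
  assert (Hsin : sqrt (1 - (x / m)²) = Rabs y / m).
  { rewrite <- (sqrt_pow2 (Rabs y / m)) by (apply Rdiv_le_0_compat; [apply Rabs_pos | lra]).
    assert (Hy2 : Rabs y ^ 2 = m ^ 2 - x ^ 2) by (rewrite pow2_abs; lra).
    f_equal. unfold Rdiv. rewrite Rpow_mult_distr, Hy2. unfold Rsqr. field. lra. }
  destruct (Rle_dec 0 y) as [Hy|Hy].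
  - exists (ln m, acos (x / m)). unfold Cexp; simpl.
    rewrite exp_ln, cos_acos, sin_acos, Hsin, Rabs_pos_eq by lra. f_equal; field; lra.
  - exists (ln m, - acos (x / m)). unfold Cexp; simpl.
    rewrite cos_neg, sin_neg, exp_ln, cos_acos, sin_acos, Hsin, Rabs_left by lra.
    f_equal; field; lra.
Qed.

(* A logarithm only on the half-plane [0 < fst q], where [atan (snd q / fst q)] is the argument. *)
Definition Clog (q : C) : C := (ln (Cmod q), atan (snd q / fst q)).

Lemma Cexp_Clog (q : C) : 0 < fst q -> Cexp (Clog q) = q.
Proof.
  intros Hq. assert (Hm : 0 < Cmod q) by (apply Cmod_gt_0; intros ->; simpl in Hq; lra).
  destruct q as [a b]. unfold Clog, Cexp. simpl in *.
  rewrite exp_ln, cos_atan, sin_atan by exact Hm.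
  assert (Hs : sqrt (1 + (b / a)²) = Cmod (a, b) / a).
  { unfold Cmod; simpl. replace (1 + (b / a)²) with ((a * (a * 1) + b * (b * 1)) / a ^ 2)
      by (unfold Rsqr; field; lra).
    rewrite sqrt_div_alt, sqrt_pow2 by nra. reflexivity. }
  rewrite Hs. f_equal; field; lra.
Qed.

Lemma Cmod_Clog_le (q : C) : Cmod (q - 1) <= 1/2 -> Cmod (Clog q) <= 4 * Cmod (q - 1).
Proof.
  intros Hq.
  assert (Hre : Rabs (fst q - 1) <= Cmod (q - 1)) by apply (Rabs_Re_sub_le q 1).
  assert (Him : Rabs (snd q) <= Cmod (q - 1)).
  { replace (snd q) with (snd (q - 1)%C) by (simpl; ring). apply Rabs_Im_le_Cmod. }
  assert (Hmod : Rabs (Cmod q - 1) <= Cmod (q - 1)).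
  { destruct (Cmod_triangle_sub q 1) as [H1 H2]. rewrite Cmod_1 in H1, H2. apply Rabs_le. lra. }
  apply Rabs_le_between' in Hre.
  eapply Rle_trans; [apply Cmod_le_Rabs_add|]. unfold Clog; simpl fst; simpl snd.
  assert (Rabs (ln (Cmod q)) <= 2 * Cmod (q - 1)).
  { eapply Rle_trans; [apply Rabs_ln_le; apply Rabs_le_between' in Hmod; lra | lra]. }
  assert (Rabs (atan (snd q / fst q)) <= 2 * Cmod (q - 1)).
  { eapply Rle_trans; [apply Rabs_atan_le|].
    unfold Rdiv. rewrite Rabs_mult, Rabs_inv, (Rabs_pos_eq (fst q)) by lra.
    assert (0 < / fst q <= 2).
    { split; [apply Rinv_0_lt_compat; lra|].
      replace 2 with (/ (1/2)) by field. apply Rinv_le_contravar; lra. }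
    pose proof (Rabs_pos (snd q)). nra. }
  lra.
Qed.

Lemma continuous_Clog (q : C) : 0 < fst q -> continuous Clog q.
Proof.
  intros Hq. apply continuous_C_pair.
  - apply (continuous_comp Cmod ln); [apply continuous_Cmod|].
    apply continuous_ln, Cmod_gt_0. intros ->. simpl in Hq. lra.
  - apply (continuous_comp (fun y : C => snd y / fst y) atan); [|apply continuous_atan].
    destruct q as [a b]. simpl in Hq.
    apply (continuous_mult (K := R_AbsRing) (fun y : C => snd y) (fun y : C => / fst y));
      [apply continuous_snd|].
    apply (continuous_comp fst Rinv); [apply continuous_fst | apply continuous_Rinv; simpl; lra].
Qed.

(** * The Cayley transform *)

Definition cayley (u : C) : C := ((u + 1) / (u - 1))%C.

Lemma cayley_involutive (u : C) : u <> 1%C -> cayley (cayley u) = u.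
Proof.
  intros Hu. apply Cminus_1_neq_0 in Hu. unfold cayley. field. split; [assumption|].
  replace (u + 1 - (u - 1))%C with (RtoC 2) by ring. apply RtoC_neq_0. lra.
Qed.

Lemma Cmod_add_1_lt_sub_1 (z : C) : Cmod (z + 1) < Cmod (z - 1) <-> fst z < 0.
Proof.
  pose proof (Cmod2_alt (z + 1)) as Hp. pose proof (Cmod2_alt (z - 1)) as Hm.
  pose proof (Cmod_ge_0 (z + 1)). pose proof (Cmod_ge_0 (z - 1)).
  unfold Re, Im in Hp, Hm. simpl in Hp, Hm. split; intros; nra.
Qed.

Lemma Cmod_cayley_lt_1 (z : C) : z <> 1%C -> Cmod (cayley z) < 1 <-> fst z < 0.
Proof.
  intros Hz. apply Cminus_1_neq_0, Cmod_gt_0 in Hz as Hm. unfold cayley.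
  rewrite Cmod_div, <- Cmod_add_1_lt_sub_1 by (apply Cmod_gt_0; exact Hm).
  split; intros H.
  - apply (Rmult_lt_compat_r (Cmod (z - 1))) in H; [|exact Hm].
    field_simplify in H; lra.
  - apply (Rmult_lt_reg_r (Cmod (z - 1))); [exact Hm|]. field_simplify; lra.
Qed.

Lemma cayley_neq_1 (u : C) : u <> 1%C -> cayley u <> 1%C.
Proof.
  intros Hu E. apply Cminus_1_neq_0 in Hu. unfold cayley in E.
  assert (Hsub : (u + 1 = u - 1)%C) by
    (replace (u + 1)%C with ((u + 1) / (u - 1) * (u - 1))%C by (field; exact Hu); rewrite E; ring).
  apply (RtoC_neq_0 2); [lra|].
  replace (RtoC 2) with (u + 1 - (u - 1))%C by ring. rewrite Hsub. ring.
Qed.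

Lemma cayley_re_neg (u : C) : unit_disk u -> fst (cayley u) < 0.
Proof.
  intros Hu. apply unit_disk_neq_1 in Hu as Hu1. apply Cmod_cayley_lt_1; [apply cayley_neq_1, Hu1|].
  rewrite cayley_involutive by exact Hu1. exact Hu.
Qed.

Lemma cayley_unit_disk (z : C) : fst z < 0 -> unit_disk (cayley z).
Proof. intros Hz. apply Cmod_cayley_lt_1; [apply Re_neg_neq_1|]; exact Hz. Qed.

Lemma C_derivable_cayley (u : C) : u <> 1%C -> C_derivable cayley u.
Proof.
  intros Hu. apply C_derivable_div; [| | apply Cminus_1_neq_0, Hu];
    [apply C_derivable_plus | apply C_derivable_minus];
    auto using C_derivable_id, C_derivable_const.
Qed.

Lemma Cconj_cayley (z : C) : z <> 1%C -> Cconj (cayley z) = cayley (Cconj z).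
Proof.
  intros Hz. apply Cminus_1_neq_0 in Hz. unfold cayley.
  rewrite Cdiv_conj, Cplus_conj, Cminus_conj by exact Hz.
  replace (Cconj 1) with (RtoC 1) by (apply injective_projections; simpl; ring). reflexivity.
Qed.

Lemma cayley_pseudo_dist (z1 z2 : C) : fst z1 < 0 -> fst z2 < 0 ->
  Cmod ((cayley z1 - cayley z2) / (1 - Cconj (cayley z1) * cayley z2)) =
  Cmod (z2 - z1) / Cmod (Cconj z1 + z2).
Proof.
  intros H1 H2. rewrite Cconj_cayley by (apply Re_neg_neq_1, H1). set (x1 := Cconj z1).
  assert (Hx1 : fst x1 < 0) by (unfold x1; destruct z1; simpl in *; lra).
  assert (N1 : (z1 - 1)%C <> 0%C) by (apply Cminus_1_neq_0, Re_neg_neq_1, H1).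
  assert (N2 : (z2 - 1)%C <> 0%C) by (apply Cminus_1_neq_0, Re_neg_neq_1, H2).
  assert (N3 : (x1 - 1)%C <> 0%C) by (apply Cminus_1_neq_0, Re_neg_neq_1, Hx1).
  assert (N4 : (x1 + z2)%C <> 0%C) by
    (intros E; assert (F : fst (x1 + z2)%C = 0) by (rewrite E; reflexivity); simpl in F; lra).
  unfold cayley.
  replace (((z1 + 1) / (z1 - 1) - (z2 + 1) / (z2 - 1)) /
           (1 - (x1 + 1) / (x1 - 1) * ((z2 + 1) / (z2 - 1))))%C
    with (- (z2 - z1) * (x1 - 1) / ((x1 + z2) * (z1 - 1)))%C.
  2: { field. repeat split; try assumption.
       replace ((x1 - 1) * (z2 - 1) - (x1 + 1) * (z2 + 1))%C with (-2 * (x1 + z2))%C by ring.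
       apply Cmult_neq_0; [apply RtoC_neq_0; lra | exact N4]. }
  assert (Hmod : Cmod (x1 - 1) = Cmod (z1 - 1)).
  { unfold x1. replace (RtoC 1) with (Cconj 1) at 1 by (apply injective_projections; simpl; ring).
    rewrite <- Cminus_conj. apply Cmod_conj. }
  rewrite Cmod_div, !Cmod_mult, Cmod_opp, Hmod by (apply Cmult_neq_0; assumption).
  apply Cmod_gt_0 in N1. apply Cmod_gt_0 in N4. field. lra.
Qed.

(** * The universal covering of the punctured disk *)

Definition punctured_disk (w : C) : Prop := 0 < Cmod w < 1.

Definition exp_cayley (u : C) : C := Cexp (cayley u).

Lemma exp_cayley_punctured_disk (u : C) : unit_disk u -> punctured_disk (exp_cayley u).
Proof.
  intros Hu. unfold punctured_disk, exp_cayley. rewrite Cmod_Cexp. split; [apply exp_pos|].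
  rewrite <- exp_0. apply exp_increasing, cayley_re_neg, Hu.
Qed.

Lemma C_derivable_exp_cayley (u : C) : unit_disk u -> C_derivable exp_cayley u.
Proof.
  intros Hu. apply (C_derivable_comp Cexp cayley); [apply C_derivable_Cexp|].
  apply C_derivable_cayley, unit_disk_neq_1, Hu.
Qed.

Section LocalLogarithm.

Variables (w z0 : C).
Hypothesis Hw : punctured_disk w.
Hypothesis Hz0 : Cexp z0 = w.

Definition log_disk (y : C) : Prop := Cmod (y - w) < Rmin (Cmod w) (1 - Cmod w) / 2.

Definition local_log (y : C) : C := (Clog (y / w) + z0)%C.

Lemma w_neq_0 : w <> 0%C.
Proof. apply Cmod_gt_0, Hw. Qed.

Lemma log_disk_center : log_disk w.
Proof.
  unfold log_disk. replace (w - w)%C with (RtoC 0) by ring. rewrite Cmod_0. destruct Hw.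
  apply Rdiv_lt_0_compat; [apply Rmin_pos|]; lra.
Qed.

Lemma log_disk_quot (y : C) : log_disk y -> Cmod (y / w - 1) < 1/2.
Proof.
  unfold log_disk. intros Hy. pose proof (Rmin_l (Cmod w) (1 - Cmod w)). destruct Hw.
  replace (y / w - 1)%C with ((y - w) / w)%C by (field; apply w_neq_0).
  rewrite Cmod_div by apply w_neq_0. apply (Rmult_lt_reg_r (Cmod w)); [lra|]. field_simplify; lra.
Qed.

Lemma log_disk_quot_re_pos (y : C) : log_disk y -> 0 < fst (y / w)%C.
Proof. intros Hy. apply Re_pos_near_1. pose proof (log_disk_quot y Hy). lra.
Qed.

Lemma log_disk_punctured (y : C) : log_disk y -> punctured_disk y.
Proof.
  unfold log_disk, punctured_disk. intros Hy. destruct Hw.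
  pose proof (Rmin_l (Cmod w) (1 - Cmod w)). pose proof (Rmin_r (Cmod w) (1 - Cmod w)).
  destruct (Cmod_triangle_sub y w). lra.
Qed.

Lemma Cexp_local_log (y : C) : log_disk y -> Cexp (local_log y) = y.
Proof.
  intros Hy. unfold local_log. rewrite Cexp_add, Cexp_Clog, Hz0 by (apply log_disk_quot_re_pos, Hy).
  field. apply w_neq_0.
Qed.

Lemma local_log_re_neg (y : C) : log_disk y -> fst (local_log y) < 0.
Proof.
  intros Hy. apply Cexp_re_neg. rewrite Cexp_local_log by exact Hy. apply log_disk_punctured, Hy.
Qed.

Lemma continuous_local_log (y : C) : log_disk y -> continuous local_log y.
Proof.
  intros Hy. apply (continuous_plus (V := C_NormedModule) (fun y => Clog (y / w)) (fun _ => z0));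
    [|apply continuous_const].
  apply (continuous_comp (fun y => y / w)%C Clog);
    [|apply continuous_Clog, log_disk_quot_re_pos, Hy].
  apply C_derivable_continuous, C_derivable_div;
    [apply C_derivable_id | apply C_derivable_const | apply w_neq_0].
Qed.

(* The sheets over [log_disk] are indexed by the branch of the logarithm: on [sheet k], [cayley]
   stays within 1 of [local_log + 2 pi i k], and distinct branches are 2 pi apart. *)
Definition sheet (k : Z) (x : C) : Prop :=
  unit_disk x /\ log_disk (exp_cayley x) /\
  Cmod (cayley x - local_log (exp_cayley x) - Cexp_period k) < 1.

Definition sheet_section (k : Z) (y : C) : C := cayley (local_log y + Cexp_period k).

Lemma open_log_disk : open log_disk.
Proof. apply open_Cball. Qed.

Lemma open_sheet (k : Z) : open (sheet k).
Proof.
  intros x [Hx [Hlog Hk]]. apply unit_disk_neq_1 in Hx as Hx1.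
  assert (HE : continuous exp_cayley x)
    by (apply C_derivable_continuous, C_derivable_exp_cayley, Hx).
  assert (Hc : continuous (fun x => cayley x - local_log (exp_cayley x) - Cexp_period k)%C x).
  { apply continuous_Cminus; [|apply continuous_const].
    apply continuous_Cminus; [apply C_derivable_continuous, C_derivable_cayley, Hx1|].
    apply (continuous_comp exp_cayley local_log); [exact HE | apply continuous_local_log, Hlog]. }
  repeat apply filter_and.
  - apply open_unit_disk, Hx.
  - exact (HE _ (open_log_disk _ Hlog)).
  - exact (Hc _ (open_unit_disk _ Hk)).
Qed.

Lemma sheet_disjoint (i j : Z) (x : C) : sheet i x -> sheet j x -> i = j.
Proof.
  intros [_ [_ Hi]] [_ [_ Hj]]. apply Cexp_period_inj.
  set (d := (cayley x - local_log (exp_cayley x))%C) in *.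
  replace (Cexp_period i - Cexp_period j)%C
    with ((d - Cexp_period j) + - (d - Cexp_period i))%C by ring.
  pose proof (Cmod_triangle (d - Cexp_period j) (- (d - Cexp_period i))) as H.
  rewrite Cmod_opp in H. lra.
Qed.

Lemma sheet_exists (x : C) : unit_disk x -> log_disk (exp_cayley x) -> exists k, sheet k x.
Proof.
  intros Hx Hlog. destruct (Cexp_eq (cayley x) (local_log (exp_cayley x))) as [k Hk].
  { rewrite Cexp_local_log by exact Hlog. reflexivity. }
  exists k. split; [exact Hx | split; [exact Hlog|]].
  rewrite Hk. set (l := local_log (exp_cayley x)).
  replace (l + Cexp_period k - l - Cexp_period k)%C with (RtoC 0) by ring. rewrite Cmod_0. lra.
Qed.

Lemma sheet_section_spec (k : Z) (y : C) :
  log_disk y -> sheet k (sheet_section k y) /\ exp_cayley (sheet_section k y) = y.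
Proof.
  intros Hy. unfold sheet_section.
  assert (Hre : fst (local_log y + Cexp_period k)%C < 0)
    by (simpl; rewrite Rplus_0_r; apply local_log_re_neg, Hy).
  assert (HE : exp_cayley (cayley (local_log y + Cexp_period k)) = y).
  { unfold exp_cayley. rewrite cayley_involutive, Cexp_periodic by (apply Re_neg_neq_1, Hre).
    apply Cexp_local_log, Hy. }
  split; [|exact HE]. unfold sheet. rewrite HE.
  split; [apply cayley_unit_disk, Hre | split; [exact Hy|]].
  rewrite cayley_involutive by (apply Re_neg_neq_1, Hre).
  replace (local_log y + Cexp_period k - local_log y - Cexp_period k)%C with (RtoC 0) by ring.
  rewrite Cmod_0. lra.
Qed.

Lemma sheet_section_exp_cayley (k : Z) (x : C) : sheet k x -> sheet_section k (exp_cayley x) = x.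
Proof.
  intros [Hx [Hlog Hk]].
  destruct (Cexp_eq (cayley x) (local_log (exp_cayley x))) as [m Hm].
  { rewrite Cexp_local_log by exact Hlog. reflexivity. }
  assert (m = k).
  { apply Cexp_period_inj. rewrite Hm in Hk.
    set (l := local_log (exp_cayley x)) in Hk.
    replace (l + Cexp_period m - l - Cexp_period k)%C
      with (Cexp_period m - Cexp_period k)%C in Hk by ring.
    lra. }
  subst m. unfold sheet_section. rewrite <- Hm. apply cayley_involutive, unit_disk_neq_1, Hx.
Qed.

Lemma continuous_sheet_section (k : Z) (y : C) : log_disk y -> continuous (sheet_section k) y.
Proof.
  intros Hy. unfold sheet_section.
  apply (continuous_comp (fun y => local_log y + Cexp_period k)%C cayley).
  - apply (continuous_plus (V := C_NormedModule) local_log (fun _ => Cexp_period k));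
      [apply continuous_local_log, Hy | apply continuous_const].
  - apply C_derivable_continuous, C_derivable_cayley, Re_neg_neq_1.
    simpl. rewrite Rplus_0_r. apply local_log_re_neg, Hy.
Qed.

End LocalLogarithm.

Theorem exp_cayley_covering : covering_map_disk punctured_disk exp_cayley.
Proof.
  split; [exact exp_cayley_punctured_disk | split].
  - intros w Hw. destruct (Cexp_surj w) as [z Hz]; [apply Cmod_gt_0, Hw|].
    assert (Hre : fst z < 0) by (apply Cexp_re_neg; rewrite Hz; apply Hw).
    exists (cayley z). split; [apply cayley_unit_disk, Hre|].
    unfold exp_cayley. rewrite cayley_involutive by (apply Re_neg_neq_1, Hre). exact Hz.
  - intros w Hw. destruct (Cexp_surj w) as [z0 Hz0]; [apply Cmod_gt_0, Hw|].
    exists (log_disk w). split; [apply open_log_disk|].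
    split; [apply log_disk_center, Hw|]. split; [apply log_disk_punctured, Hw|].
    exists Z, (sheet w z0). split; [intros k; apply open_sheet; assumption|].
    split; [intros k x [Hx _]; exact Hx|]. split; [apply sheet_disjoint|]. split.
    + intros x Hx. split; [intros Hlog; apply sheet_exists; assumption|].
      intros [k [_ [Hlog _]]]. exact Hlog.
    + intros k. exists (sheet_section w z0 k). split; [|split].
      * apply continuous_on_set_continuous. intros y Hy. apply continuous_sheet_section; assumption.
      * intros y Hy. apply sheet_section_spec; assumption.
      * apply sheet_section_exp_cayley; assumption.
Qed.

(** * Universal coverings of B(0, r0) \ {r} *)

(* Only the inverse [phi] has to be continuous: evenly covered neighbourhoods are pulled back
   along [phi]. *)
Lemma covering_map_disk_homeo (W1 W2 : C -> Prop) (p psi phi : C -> C) :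
  covering_map_disk W1 p -> open W2 ->
  (forall s, W1 s -> W2 (psi s) /\ phi (psi s) = s) ->
  (forall y, W2 y -> W1 (phi y) /\ psi (phi y) = y) ->
  (forall y, W2 y -> continuous phi y) ->
  covering_map_disk W2 (fun u => psi (p u)).
Proof.
  intros [Hmaps [Hsurj Hcov]] HW2 Hpsi Hphi Hcont. split; [|split].
  - intros u Hu. apply Hpsi, Hmaps, Hu.
  - intros y Hy. destruct (Hphi y Hy) as [Hy1 Hy2]. destruct (Hsurj _ Hy1) as [u [Hu Hpu]].
    exists u. split; [exact Hu|]. rewrite Hpu. exact Hy2.
  - intros y Hy. destruct (Hphi y Hy) as [Hy1 _].
    destruct (Hcov _ Hy1) as [V [HV [HVy [HVW [I [S [HS [HSD [HSdisj [HSV HSsec]]]]]]]]]].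
    exists (fun t => W2 t /\ V (phi t)). split; [|split; [|split]].
    + intros t [Ht1 Ht2]. apply filter_and; [apply HW2, Ht1 | apply (Hcont t Ht1), HV, Ht2].
    + split; assumption.
    + intros t [Ht _]. exact Ht.
    + exists I, S. do 3 (split; [assumption|]). split.
      * intros x Hx. destruct (Hpsi (p x) (Hmaps x Hx)) as [HW2x Hinv]. rewrite Hinv.
        split; [intros [_ HVx]; apply HSV; assumption | intros Hi; split; [|apply HSV]; assumption].
      * intros i. destruct (HSsec i) as [g [Hg [HgS HgK]]].
        exists (fun t => g (phi t)). split; [|split].
        -- intros t [Ht1 Ht2].
           apply (filterlim_comp _ _ _ phi g _ (within V (locally (phi t)))); [|apply Hg, Ht2].
           intros P HP. unfold filtermap, within in *.
           apply (filter_imp (fun t' => V (phi t') -> P (phi t'))), (Hcont t Ht1 _ HP).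
           intros t' H' [_ H'']. apply H', H''.
        -- intros t [Ht1 Ht2]. destruct (HgS _ Ht2) as [HgSt Hgt]. split; [exact HgSt|].
           rewrite Hgt. apply Hphi, Ht1.
        -- intros x Hx. destruct (Hpsi (p x) (Hmaps x (HSD i x Hx))) as [_ Hinv].
           rewrite Hinv. apply HgK, Hx.
Qed.

Lemma id_covering : covering_map_disk unit_disk (fun u => u).
Proof.
  split; [|split].
  - intros u Hu. exact Hu.
  - intros w Hw. exists w. split; [exact Hw | reflexivity].
  - intros w Hw. exists unit_disk. split; [apply open_unit_disk|]. do 2 (split; [auto|]).
    exists unit, (fun _ => unit_disk). split; [intros; apply open_unit_disk|].
    split; [auto|]. split; [intros [] [] _ _ _; reflexivity|]. split.
    + intros x _. split; [intros Hx; exists tt; exact Hx | intros [_ Hx]; exact Hx].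
    + intros _. exists (fun y => y). split; [|split; auto].
      apply continuous_on_set_continuous. intros y _. apply continuous_id.
Qed.

Definition disk_mobius (b : R) (s : C) : C := ((s - b) / (1 - b * s))%C.

Section DiskMobius.

Variable b : R.
Hypothesis Hb : -1 < b < 1.

Lemma Cmod_sub_lt_mobius_den (s : C) : unit_disk s -> Cmod (s - b) < Cmod (1 - b * s).
Proof.
  unfold unit_disk. intros Hs. pose proof (Cmod2_alt s) as Hsq. pose proof (Cmod_ge_0 s).
  pose proof (Cmod2_alt (s - b)) as Hn. pose proof (Cmod2_alt (1 - b * s)) as Hd.
  pose proof (Cmod_ge_0 (s - b)). pose proof (Cmod_ge_0 (1 - b * s)).
  unfold Re, Im in *. destruct s as [x y]. simpl in *.
  assert (0 < (1 - b ^ 2) * (1 - x ^ 2 - y ^ 2)) by (apply Rmult_lt_0_compat; nra).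
  nra.
Qed.

Lemma mobius_den_neq_0 (s : C) : unit_disk s -> (1 - b * s)%C <> 0%C.
Proof.
  intros Hs E. pose proof (Cmod_sub_lt_mobius_den s Hs). rewrite E, Cmod_0 in H.
  pose proof (Cmod_ge_0 (s - b)). lra.
Qed.

Lemma disk_mobius_unit_disk (s : C) : unit_disk s -> unit_disk (disk_mobius b s).
Proof.
  intros Hs. pose proof (Cmod_sub_lt_mobius_den s Hs) as H. apply mobius_den_neq_0 in Hs.
  apply Cmod_gt_0 in Hs as Hpos. unfold unit_disk, disk_mobius. rewrite Cmod_div by exact Hs.
  apply (Rmult_lt_reg_r (Cmod (1 - b * s))); [exact Hpos|]. field_simplify; lra.
Qed.

Lemma disk_mobius_involutive (s : C) : unit_disk s -> disk_mobius (- b) (disk_mobius b s) = s.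
Proof.
  intros Hs. apply mobius_den_neq_0 in Hs as Hden. unfold disk_mobius. rewrite RtoC_opp. field.
  split; [exact Hden|].
  replace (1 - b * s - - b * (s - b))%C with (RtoC (1 - b ^ 2))
    by (rewrite RtoC_minus, RtoC_pow; ring).
  apply RtoC_neq_0. nra.
Qed.

Lemma disk_mobius_self : disk_mobius b b = 0%C.
Proof.
  unfold disk_mobius. replace (RtoC b - b)%C with (RtoC 0) by ring. unfold Cdiv. apply Cmult_0_l.
Qed.

Lemma disk_mobius_eq_0 (s : C) : unit_disk s -> disk_mobius b s = 0%C -> s = b.
Proof.
  intros Hs E. apply mobius_den_neq_0 in Hs. unfold disk_mobius in E.
  replace s with ((s - b) / (1 - b * s) * (1 - b * s) + b)%C by (field; exact Hs).
  rewrite E. ring.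
Qed.

Lemma C_derivable_disk_mobius (s : C) : unit_disk s -> C_derivable (disk_mobius b) s.
Proof.
  intros Hs. apply C_derivable_div; [| | apply mobius_den_neq_0, Hs].
  - apply C_derivable_minus; [apply C_derivable_id | apply C_derivable_const].
  - apply C_derivable_minus; [apply C_derivable_const|].
    apply C_derivable_mult; [apply C_derivable_const | apply C_derivable_id].
Qed.

End DiskMobius.

(* The puncture 0 of [punctured_disk] is sent to r0 * (r / r0) = r, and - r / r0 to 0. *)
Definition punctured_ball_cover (r0 r : R) (u : C) : C :=
  (r0 * disk_mobius (- (r / r0)) (exp_cayley u))%C.

Section PuncturedBallCover.

Variables r0 r : R.
Hypothesis Hr : 0 < r < r0.

Let a := r / r0.

Lemma radius_ratio_bounds : 0 < a < 1.
Proof.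
  unfold a. split; [apply Rdiv_lt_0_compat; lra|].
  apply (Rmult_lt_reg_r r0); [lra|]. field_simplify; lra.
Qed.

Let r0_neq_0 : RtoC r0 <> 0%C := RtoC_neq_0 r0 ltac:(lra).

Lemma punctured_ball_cover_covering :
  covering_map_disk (punctured_ball r0 r) (punctured_ball_cover r0 r).
Proof.
  pose proof radius_ratio_bounds as Ha.
  apply (covering_map_disk_homeo punctured_disk _ exp_cayley
           (fun s => r0 * disk_mobius (- a) s)%C (fun y => disk_mobius a (y / r0))%C
           exp_cayley_covering (open_punctured_ball r0 r)).
  - intros s [Hs0 Hs1]. assert (Hinv : disk_mobius a ((r0 * disk_mobius (- a) s) / r0) = s).
    { replace ((r0 * disk_mobius (- a) s) / r0)%C with (disk_mobius (- a) s)
        by (field; apply r0_neq_0).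
      rewrite <- (Ropp_involutive a) at 1. apply disk_mobius_involutive; [lra | exact Hs1]. }
    split; [|exact Hinv]. split.
    + unfold open_ball0. rewrite Cmod_mult, Cmod_R, Rabs_pos_eq by lra.
      pose proof (disk_mobius_unit_disk (- a) ltac:(lra) s Hs1). unfold unit_disk in H.
      rewrite <- (Rmult_1_r r0) at 2. apply Rmult_lt_compat_l; lra.
    + intros E. rewrite E in Hinv. replace (RtoC r / r0)%C with (RtoC a) in Hinv
        by (unfold a; rewrite RtoC_div; [reflexivity | lra]).
      rewrite disk_mobius_self in Hinv. rewrite <- Hinv, Cmod_0 in Hs0. lra.
  - intros y [Hy Hyr]. apply unit_disk_div in Hy as Hq; [|lra]. split; [split|].
    + apply Cmod_gt_0. intros E. apply Hyr.
      apply disk_mobius_eq_0 in E; [|lra | exact Hq].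
      replace y with (y / r0 * r0)%C by (field; apply r0_neq_0). rewrite E.
      unfold a. rewrite <- RtoC_mult. f_equal. field. lra.
    + apply disk_mobius_unit_disk; [lra | exact Hq].
    + rewrite disk_mobius_involutive by (lra || exact Hq). field. apply r0_neq_0.
  - intros y [Hy _]. apply C_derivable_continuous.
    apply (C_derivable_comp (disk_mobius a) (fun y => y / r0)%C).
    + apply C_derivable_disk_mobius; [lra | apply unit_disk_div; [lra | exact Hy]].
    + apply C_derivable_div; [apply C_derivable_id | apply C_derivable_const | apply r0_neq_0].
Qed.

Lemma holomorphic_punctured_ball_cover : holomorphic_on unit_disk (punctured_ball_cover r0 r).
Proof.
  pose proof radius_ratio_bounds as Ha. intros u Hu. apply C_derivable_ex_derive.
  apply (C_derivable_comp (fun s => r0 * disk_mobius (- a) s)%C exp_cayley);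
    [|apply C_derivable_exp_cayley, Hu].
  apply C_derivable_mult; [apply C_derivable_const|].
  apply C_derivable_disk_mobius; [lra|]. apply exp_cayley_punctured_disk, Hu.
Qed.

End PuncturedBallCover.

Lemma ball_covering (r0 r : R) : 0 < r0 <= r ->
  covering_map_disk (punctured_ball r0 r) (fun u => r0 * u)%C.
Proof.
  intros Hr. assert (Hr0 : RtoC r0 <> 0%C) by (apply RtoC_neq_0; lra).
  apply (covering_map_disk_homeo unit_disk _ (fun u => u) (fun s => r0 * s)%C (fun y => y / r0)%C
           id_covering (open_punctured_ball r0 r)).
  - intros s Hs. unfold unit_disk in Hs.
    assert (Hm : Cmod (r0 * s) < r0) by
      (rewrite Cmod_mult, Cmod_R, Rabs_pos_eq by lra; pose proof (Cmod_ge_0 s); nra).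
    split; [split; [exact Hm|] | field; exact Hr0].
    intros E. rewrite E, Cmod_R, Rabs_pos_eq in Hm; lra.
  - intros y [Hy _]. split; [apply unit_disk_div; [lra | exact Hy] | field; exact Hr0].
  - intros y _. apply C_derivable_continuous, C_derivable_div;
      [apply C_derivable_id | apply C_derivable_const | exact Hr0].
Qed.

Lemma holomorphic_ball_cover (r0 : R) : holomorphic_on unit_disk (fun u => r0 * u)%C.
Proof.
  intros u _. apply C_derivable_ex_derive, C_derivable_mult;
    [apply C_derivable_const | apply C_derivable_id].
Qed.

(** * Bounds on the hyperbolic distance *)

Lemma hyp_dist_le_disk_dist (W : C -> Prop) (p : C -> C) (u v : C) :
  holomorphic_on unit_disk p -> covering_map_disk W p -> unit_disk u -> unit_disk v ->
  Rbar_le (hyp_dist W (p u) (p v)) (disk_dist u v).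
Proof.
  intros Hp Hcov Hu Hv. apply Glb_Rbar_correct.
  exists p, u, v. do 4 (split; [assumption|]). auto.
Qed.

Lemma disk_dist_le (u v : C) :
  Cmod ((u - v) / (1 - Cconj u * v)) <= 1/3 ->
  disk_dist u v <= 3 * Cmod ((u - v) / (1 - Cconj u * v)).
Proof. intros H. apply ln_pseudo_dist_le. split; [apply Cmod_ge_0 | exact H]. Qed.

Lemma hyp_dist_ball_le (r0 r : R) (z : C) : 0 < r0 <= r -> Cmod z <= r0 / 3 ->
  Rbar_le (hyp_dist (punctured_ball r0 r) 0 z) (3 * Cmod z / r0).
Proof.
  intros Hr Hz. assert (Hr0 : RtoC r0 <> 0%C) by (apply RtoC_neq_0; lra).
  assert (Hv : Cmod (z / r0) = Cmod z / r0) by (apply Cmod_div_Rpos; lra).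
  assert (Hv3 : Cmod (z / r0) <= 1/3)
    by (rewrite Hv; apply (Rmult_le_reg_r r0); [lra|]; field_simplify; lra).
  replace (RtoC 0) with (r0 * 0)%C by ring.
  replace z with (r0 * (z / r0))%C at 1 by (field; exact Hr0).
  apply (Rbar_le_trans _ (disk_dist 0 (z / r0))).
  - apply (hyp_dist_le_disk_dist _ (fun u => r0 * u)%C).
    + apply holomorphic_ball_cover.
    + apply ball_covering, Hr.
    + unfold unit_disk. rewrite Cmod_0. lra.
    + unfold unit_disk. lra.
  - assert (Hps : Cmod ((0 - z / r0) / (1 - Cconj 0 * (z / r0))) = Cmod z / r0).
    { rewrite <- Hv, <- (Cmod_opp (z / r0)). f_equal.
      replace (Cconj 0) with (RtoC 0) by (apply injective_projections; simpl; ring).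
      field. exact Hr0. }
    simpl. eapply Rle_trans; [apply disk_dist_le; rewrite Hps, <- Hv; exact Hv3|].
    rewrite Hps. right. field. lra.
Qed.

Lemma Cmod_conj_add_ge (z1 eta : C) :
  Cmod eta <= - fst z1 -> - fst z1 <= Cmod (Cconj z1 + (z1 + eta)).
Proof.
  intros H. pose proof (re_le_Cmod (Cconj z1 + (z1 + eta))) as Hre.
  pose proof (re_le_Cmod eta) as He.
  unfold Re in *. simpl in Hre. apply Rabs_le_between in He.
  destruct z1 as [x y]. simpl in *. unfold Rabs in *.
  destruct (Rcase_abs (x + (x + fst eta))); lra.
Qed.

Lemma hyp_dist_half_plane_le (r0 r : R) (z1 eta : C) : 0 < r < r0 -> fst z1 < 0 ->
  Cmod eta <= - fst z1 / 3 ->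
  Rbar_le (hyp_dist (punctured_ball r0 r) (punctured_ball_cover r0 r (cayley z1))
                                          (punctured_ball_cover r0 r (cayley (z1 + eta))))
          (3 * Cmod eta / (- fst z1)).
Proof.
  intros Hr Hz1 Heta. pose proof (re_le_Cmod eta) as He. unfold Re in He.
  apply Rabs_le_between in He.
  assert (Hz2 : fst (z1 + eta)%C < 0) by (simpl; lra).
  assert (Hden : - fst z1 <= Cmod (Cconj z1 + (z1 + eta))) by (apply Cmod_conj_add_ge; lra).
  assert (Hps : Cmod ((cayley z1 - cayley (z1 + eta)) / (1 - Cconj (cayley z1) * cayley (z1 + eta)))
                <= Cmod eta / (- fst z1)).
  { rewrite cayley_pseudo_dist by assumption. replace (z1 + eta - z1)%C with eta by ring.
    pose proof (Cmod_ge_0 eta). apply Rmult_le_compat_l; [lra|]. apply Rinv_le_contravar; lra. }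
  apply (Rbar_le_trans _ (disk_dist (cayley z1) (cayley (z1 + eta)))).
  - apply hyp_dist_le_disk_dist; [apply holomorphic_punctured_ball_cover, Hr
      | apply punctured_ball_cover_covering, Hr | apply cayley_unit_disk; assumption..].
  - simpl. eapply Rle_trans; [apply disk_dist_le|].
    + eapply Rle_trans; [exact Hps|].
      apply (Rmult_le_reg_r (- fst z1)); [lra|]. field_simplify; lra.
    + unfold Rdiv. lra.
Qed.

Lemma punctured_ball_cover_base (r0 r : R) : 0 < r < r0 ->
  punctured_ball_cover r0 r (cayley (ln (r / r0), PI)) = 0%C.
Proof.
  intros Hr. pose proof (radius_ratio_bounds r0 r Hr) as Ha.
  assert (Hre : fst (ln (r / r0), PI) < 0) by (apply ln_lt_0, Ha).
  unfold punctured_ball_cover, exp_cayley.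
  rewrite cayley_involutive, Cexp_ln_PI, disk_mobius_self by (lra || apply Re_neg_neq_1, Hre).
  ring.
Qed.

Lemma disk_mobius_quot_near_1 (a : R) (q : C) : 0 < a < 1 -> unit_disk q -> a * Cmod q <= 1/2 ->
  Cmod (disk_mobius a q / RtoC (- a) - 1) <= 2 * Cmod q * (1 - a ^ 2) / a.
Proof.
  intros Ha Hq Haq. assert (Hden : 1/2 <= Cmod (1 - a * q)).
  { destruct (Cmod_triangle_sub (1 - a * q) 1) as [H _].
    replace (1 - a * q - 1)%C with (- (a * q))%C in H by ring.
    rewrite Cmod_opp, Cmod_mult, !Cmod_R, Rabs_R1, Rabs_pos_eq in H; lra. }
  assert (Hq1 : (1 - a * q)%C <> 0%C) by (apply Cmod_gt_0; lra).
  assert (HaC : RtoC a <> 0%C) by (apply RtoC_neq_0; lra).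
  replace (disk_mobius a q / RtoC (- a) - 1)%C with (- (q * RtoC (1 - a ^ 2)) / (a * (1 - a * q)))%C
    by (rewrite RtoC_opp, RtoC_minus, RtoC_pow; unfold disk_mobius; field; split; assumption).
  rewrite Cmod_div, Cmod_opp, !Cmod_mult, !Cmod_R, !Rabs_pos_eq
    by (nra || apply Cmult_neq_0; assumption).
  apply (Rmult_le_reg_r (a * Cmod (1 - a * q))); [nra|].
  pose proof (Cmod_ge_0 q). field_simplify; [|nra | lra].
  assert (0 <= Cmod q * (1 - a ^ 2) * (2 * Cmod (1 - a * q) - 1))
    by (apply Rmult_le_pos; [apply Rmult_le_pos|]; nra).
  nra.
Qed.

Lemma punctured_ball_cover_small_lift (r0 r : R) (z : C) : 0 < r < r0 -> Cmod z <= r / 32 ->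
  exists eta, punctured_ball_cover r0 r (cayley ((ln (r / r0), PI) + eta)) = z /\
              Cmod eta <= 8 * (Cmod z / r) * (1 - (r / r0) ^ 2).
Proof.
  intros Hr Hz. pose proof (radius_ratio_bounds r0 r Hr) as Ha. set (a := r / r0) in *.
  set (m := Cmod z / r). assert (Hm : 0 <= m <= 1/32).
  { unfold m. split; [apply Rdiv_le_0_compat; [apply Cmod_ge_0 | lra]|].
    apply (Rmult_le_reg_r r); [lra|]. field_simplify; lra. }
  set (q := (z / r0)%C).
  assert (Hqm : Cmod q = m * a) by (unfold q, m, a; rewrite Cmod_div_Rpos by lra; field; lra).
  assert (Hq : unit_disk q) by (unfold unit_disk; rewrite Hqm; nra).
  set (Y := (disk_mobius a q / RtoC (- a))%C).
  assert (HY : Cmod (Y - 1) <= 2 * m * (1 - a ^ 2)).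
  { unfold Y. eapply Rle_trans;
      [apply disk_mobius_quot_near_1; [lra | exact Hq | rewrite Hqm; nra]|].
    rewrite Hqm. right. field. lra. }
  assert (HY1 : Cmod (Y - 1) <= 1/2) by nra.
  assert (Heta : Cmod (Clog Y) <= 8 * m * (1 - a ^ 2)) by
    (eapply Rle_trans; [apply Cmod_Clog_le, HY1 | lra]).
  exists (Clog Y). split; [|exact Heta].
  assert (Hre : fst ((ln a, PI) + Clog Y)%C < 0).
  { pose proof (re_le_Cmod (Clog Y)) as Hre. unfold Re in Hre. apply Rabs_le_between in Hre.
    pose proof (one_sub_sq_le a (proj1 Ha)). pose proof (ln_lt_0 a Ha).
    assert (8 * m * (1 - a ^ 2) <= 8 * m * (- 2 * ln a)) by (apply Rmult_le_compat_l; lra).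
    assert (m * (- ln a) <= 1/32 * (- ln a)) by (apply Rmult_le_compat_r; lra).
    change (ln a + fst (Clog Y) < 0). lra. }
  unfold punctured_ball_cover, exp_cayley. fold a.
  rewrite cayley_involutive by (apply Re_neg_neq_1, Hre).
  rewrite Cexp_add, Cexp_ln_PI, Cexp_Clog by (lra || apply Re_pos_near_1; lra).
  assert (HaC : RtoC (- a) <> 0%C) by (apply RtoC_neq_0; lra).
  replace (RtoC (- a) * Y)%C with (disk_mobius a q) by (unfold Y; field; exact HaC).
  rewrite disk_mobius_involutive by (lra || exact Hq). unfold q. field. apply RtoC_neq_0. lra.
Qed.

Lemma hyp_dist_punctured_ball_le (r0 r : R) (z : C) : 0 < r < r0 -> Cmod z <= r / 96 ->
  Rbar_le (hyp_dist (punctured_ball r0 r) 0 z) (96 * Cmod z / (r * (1 + 2 * ln (r0 / r)))).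
Proof.
  intros Hr Hz. pose proof (radius_ratio_bounds r0 r Hr) as Ha.
  destruct (punctured_ball_cover_small_lift r0 r z Hr ltac:(lra)) as [eta [Hlift Heta]].
  set (a := r / r0) in *. set (m := Cmod z / r) in *.
  assert (HL : ln (r0 / r) = - ln a) by (unfold a; rewrite !ln_div by lra; ring).
  pose proof (ln_lt_0 a Ha) as Hla.
  rewrite HL. set (L := - ln a) in *. assert (HLa : L = - ln a) by reflexivity.
  assert (HL0 : 0 < L) by lra.
  assert (Hm : 0 <= m <= 1/96).
  { unfold m. split; [apply Rdiv_le_0_compat; [apply Cmod_ge_0 | lra]|].
    apply (Rmult_le_reg_r r); [lra|]. field_simplify; lra. }
  pose proof (one_sub_sq_le a (proj1 Ha)) as Hsq. pose proof (one_sub_sq_mul_le a Ha) as Hsq2.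
  replace (1 - 2 * ln a) with (1 + 2 * L) in Hsq2 by lra.
  assert (H1 : 0 <= 1 - a ^ 2) by nra.
  replace (hyp_dist (punctured_ball r0 r) 0 z) with
    (hyp_dist (punctured_ball r0 r) (punctured_ball_cover r0 r (cayley (ln a, PI)))
                                    (punctured_ball_cover r0 r (cayley ((ln a, PI) + eta))))
    by (rewrite punctured_ball_cover_base, Hlift by exact Hr; reflexivity).
  apply (Rbar_le_trans _ (3 * Cmod eta / L)).
  - apply hyp_dist_half_plane_le; [exact Hr | simpl; lra |]. simpl.
    assert (8 * m * (1 - a ^ 2) <= 8 * m * (2 * L)) by (apply Rmult_le_compat_l; lra). nra.
  - simpl. apply (Rmult_le_reg_r (L * (1 + 2 * L))); [nra|].
    replace (3 * Cmod eta / L * (L * (1 + 2 * L))) with (3 * Cmod eta * (1 + 2 * L))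
      by (field; lra).
    replace (96 * Cmod z / (r * (1 + 2 * L)) * (L * (1 + 2 * L))) with (96 * m * L)
      by (unfold m; field; lra).
    assert (Cmod eta * (1 + 2 * L) <= 8 * m * ((1 - a ^ 2) * (1 + 2 * L))) by
      (rewrite <- Rmult_assoc; apply Rmult_le_compat_r; lra).
    assert (8 * m * ((1 - a ^ 2) * (1 + 2 * L)) <= 8 * m * (4 * L))
      by (apply Rmult_le_compat_l; lra).
    lra.
Qed.

Definition gamma_of (r0 : R) : R := r0 / (192 * (1 - ln r0)).

Lemma ball_case_bound (r0 r delta M : R) (z : C) :
  0 < r0 < 1 -> r0 <= r <= 1 -> 0 < delta < 1/10 -> 1 - ln r <= M ->
  Cmod z <= gamma_of r0 * delta * r * (1 - ln r) / M ->
  Rbar_le (hyp_dist (punctured_ball r0 r) 0 z) (delta / (2 * M)).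
Proof.
  intros Hr0 Hr Hd HM Hz. unfold gamma_of in Hz.
  pose proof (ln_lt_0 r0 Hr0) as Hln.
  assert (HM1 : 1 <= M) by (assert (ln r <= 0) by (rewrite <- ln_1; apply ln_le; lra); lra).
  pose proof (Cmod_ge_0 z) as Hz0. pose proof (mul_one_sub_ln_le_1 r ltac:(lra)) as Hr1.
  assert (Hz' : Cmod z * M * 192 * (1 - ln r0) <= r0 * delta * (r * (1 - ln r))).
  { apply (Rmult_le_compat_r (192 * (1 - ln r0) * M)) in Hz; [|nra].
    replace (r0 / (192 * (1 - ln r0)) * delta * r * (1 - ln r) / M * (192 * (1 - ln r0) * M))
      with (r0 * delta * (r * (1 - ln r))) in Hz by (field; lra). lra. }
  assert (HzM : Cmod z * M * 192 <= r0 * delta).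
  { assert (Cmod z * M * 192 * 1 <= Cmod z * M * 192 * (1 - ln r0))
      by (apply Rmult_le_compat_l; nra).
    assert (r0 * delta * (r * (1 - ln r)) <= r0 * delta * 1) by (apply Rmult_le_compat_l; nra).
    lra. }
  apply (Rbar_le_trans _ (3 * Cmod z / r0)); [apply hyp_dist_ball_le; nra|].
  simpl. apply (Rmult_le_reg_r (2 * M * r0)); [nra|].
  replace (3 * Cmod z / r0 * (2 * M * r0)) with (6 * (Cmod z * M)) by (field; lra).
  replace (delta / (2 * M) * (2 * M * r0)) with (r0 * delta) by (field; lra).
  nra.
Qed.

Lemma punctured_case_bound (r0 r delta M : R) (z : C) :
  0 < r0 < 1 -> 0 < r < r0 -> 0 < delta < 1/10 -> 1 - ln r <= M ->
  Cmod z <= gamma_of r0 * delta * r * (1 - ln r) / M ->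
  Rbar_le (hyp_dist (punctured_ball r0 r) 0 z) (delta / (2 * M)).
Proof.
  intros Hr0 Hr Hd HM Hz. unfold gamma_of in Hz. pose proof (ln_lt_0 r0 Hr0) as Hln.
  assert (HL : 0 < ln (r0 / r)) by (rewrite <- ln_1; apply ln_increasing; [lra|];
    apply (Rmult_lt_reg_r r); [lra|]; field_simplify; lra).
  assert (HN : 1 - ln r = (1 - ln r0) + ln (r0 / r)) by (rewrite ln_div by lra; ring).
  assert (HK : 1 < 1 - ln r0) by lra.
  set (K := 1 - ln r0) in *. set (L := ln (r0 / r)) in *. rewrite HN in Hz, HM.
  set (m := Cmod z / r). pose proof (Cmod_ge_0 z) as Hz0.
  assert (Hm : m * (192 * K * M) <= r0 * delta * (K + L)).
  { unfold m. apply (Rmult_le_reg_r r); [lra|].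
    apply (Rmult_le_compat_r (192 * K * M)) in Hz; [|nra].
    replace (Cmod z / r * (192 * K * M) * r) with (Cmod z * (192 * K * M)) by (field; lra).
    replace (r0 * delta * (K + L) * r)
      with (r0 / (192 * K) * delta * r * (K + L) / M * (192 * K * M))
      by (field; lra). exact Hz. }
  assert (Hm0 : 0 <= m) by (unfold m; apply Rdiv_le_0_compat; lra).
  assert (Hm1 : m * 192 <= delta).
  { assert (HKM : K + L <= K * M) by nra.
    assert (m * 192 * (K + L) <= m * 192 * (K * M)) by (apply Rmult_le_compat_l; lra).
    assert (r0 * (delta * (K + L)) <= 1 * (delta * (K + L))) by (apply Rmult_le_compat_r; nra).
    assert (m * 192 * (K + L) <= delta * (K + L)) by lra.
    apply (Rmult_le_reg_r (K + L)); lra. }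
  apply (Rbar_le_trans _ (96 * Cmod z / (r * (1 + 2 * L)))).
  - apply hyp_dist_punctured_ball_le; [lra|].
    replace (Cmod z) with (m * r) by (unfold m; field; lra). nra.
  - simpl. replace (96 * Cmod z / (r * (1 + 2 * L))) with (96 * m / (1 + 2 * L))
      by (unfold m; field; lra).
    apply (Rmult_le_reg_r (2 * M * (1 + 2 * L))); [nra|].
    replace (96 * m / (1 + 2 * L) * (2 * M * (1 + 2 * L))) with (192 * m * M) by (field; lra).
    replace (delta / (2 * M) * (2 * M * (1 + 2 * L))) with (delta * (1 + 2 * L)) by (field; lra).
    assert (K + L <= K * (1 + 2 * L)) by nra.
    assert (r0 * (delta * (K + L)) <= 1 * (delta * (K + L))) by (apply Rmult_le_compat_r; nra).
    assert (delta * (K + L) <= delta * (K * (1 + 2 * L))) by (apply Rmult_le_compat_l; lra).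
    apply (Rmult_le_reg_r K); lra.
Qed.

Theorem lemma7 :
  forall r0 : R, 0 < r0 < 1 ->
  exists gamma : R, 0 < gamma /\
    forall (delta alpha r : R) (z : C),
      0 < delta < 1 / 10 ->
      0 < alpha -> alpha < r -> r <= 1 ->
      Cmod z <= gamma * delta * r * ln (exp 1 / r) / ln (exp 1 / alpha) ->
      Rbar_le (hyp_dist (punctured_ball r0 r) 0%C z)
              (Finite (delta / (2 * ln (exp 1 / alpha)))).
Proof.
  intros r0 Hr0. exists (gamma_of r0).
  split; [pose proof (ln_lt_0 r0 Hr0); apply Rdiv_lt_0_compat; lra|].
  intros delta alpha r z Hd Ha Har Hr1 Hz.
  rewrite (ln_e_div r) in Hz by lra. rewrite (ln_e_div alpha) in Hz |- * by lra.
  assert (ln alpha < ln r) by (apply ln_increasing; lra).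
  destruct (Rle_lt_dec r0 r).
  - apply ball_case_bound; lra.
  - apply punctured_case_bound; lra.
Qed.
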